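(* Let $K$ be a skew field, $V$ a left (topological) $K$-vector space with basis $v^0,v^1,\ldots$, $V'$ the dual right (topological) $K$-vector space with basis $p_0,p_1,\ldots$, with pairing $(\cdot,\cdot)$; let $\mathbf f\in V$, $\mathbf g\in V'$, and put $y_i^k=(v^k,p_i)$, $f_i=(\mathbf f,p_i)$, $g^k=(v^k,\mathbf g)$. Assume the matrix $D=(y_i^k)$ is generic. Then, with the difference derivatives defined as in the context: (a) $(\Delta_R^0 f)_i^k=f_i(y_i^k)^{-1}$, $(\Delta_R^1 f)_{ii'}^{kk'}=\big((\Delta_R^0 f)_i^k-(\Delta_R^0 f)_{i'}^k\big)\big((\Delta_R^0 y^{k'})_i^k-(\Delta_R^0 y^{k'})_{i'}^k\big)^{-1}$, and for $m\ge1$ $$(\Delta_R^m f)_{i_0\ldots i_m}^{k_0\ldots k_m}=\big((\Delta_R^{m-1}f)_{i_0\ldots i_{m-1}}^{k_0\ldots k_{m-1}}-(\Delta_R^{m-1}f)_{i_0\ldots i_{m-2}i_m}^{k_0\ldots k_{m-1}}\big)\big((\Delta_R^{m-1}y^{k_m})_{i_0\ldots i_{m-1}}^{k_0\ldots k_{m-1}}-(\Delta_R^{m-1}y^{k_m})_{i_0\ldots i_{m-2}i_m}^{k_0\ldots k_{m-1}}\big)^{-1}.$$ (b) $(\Delta_L^0 g)_i^k=(y_i^k)^{-1}g^k$, $(\Delta_L^1 g)_{ii'}^{kk'}=\big((\Delta_L^0 y_{i'})_i^k-(\Delta_L^0 y_{i'})_i^{k'}\big)^{-1}\big((\Delta_L^0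 g)_i^k-(\Delta_L^0 g)_i^{k'}\big)$, and for $m\ge1$ $$(\Delta_L^m g)_{i_0\ldots i_m}^{k_0\ldots k_m}=\big((\Delta_L^{m-1}y_{i_m})_{i_0\ldots i_{m-1}}^{k_0\ldots k_{m-1}}-(\Delta_L^{m-1}y_{i_m})_{i_0\ldots i_{m-1}}^{k_0\ldots k_{m-2}k_m}\big)^{-1}\big((\Delta_L^{m-1}g)_{i_0\ldots i_{m-1}}^{k_0\ldots k_{m-1}}-(\Delta_L^{m-1}g)_{i_0\ldots i_{m-1}}^{k_0\ldots k_{m-2}k_m}\big).$$
   Context: The pairing $(\cdot,\cdot):V\times V'\to K$ is biadditive with $(\lambda v,p\mu)=\lambda(v,p)\mu$. $D$ is the infinite matrix with entry $y_i^k$ in row $k$, column $i$; $y^k=(y_0^k,y_1^k,\ldots)$ is its $k$-th row and $y_i=(y_i^0,y_i^1,\ldots)$ its $i$-th column; $f=(f_i)$ and $g=(g^k)$. Difference derivatives: let $i_0,i_1,\ldots$ and $k_0,k_1,\ldots$ be permutations of $\{0,1,2,\ldots\}$. For generic $D$ there are unique upper triangular $A=(a_m^j)$ ($a_m^j=0$ for $j>m$) and lower triangular $C=(c_l^m)$ ($c_l^m=0$ for $l>m$) such that $q_m=\sum_{j=0}^m p_{i_j}a_m^j$ and $w^m=\sum_{l=0}^m c_l^m v^{k_l}$ satisfy $(w^m,q_{m'})=0$ for $m\neq m'$ and $(w^m,p_{i_m})=(v^{k_m},q_m)=1$. Equivalently, $q_m$ is the unique right linear combination of $p_{i_0},\ldots,p_{i_m}$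 with $(v^{k_l},q_m)=0$ for $l<m$ and $(v^{k_m},q_m)=1$, and $w^m$ is the unique left linear combination of $v^{k_0},\ldots,v^{k_m}$ with $(w^m,p_{i_j})=0$ for $j<m$ and $(w^m,p_{i_m})=1$; so these depend only on $i_0,\ldots,i_m,k_0,\ldots,k_m$. Define the $m$-th right and left difference derivatives $(\Delta_R^m f)_{i_0\ldots i_m}^{k_0\ldots k_m}=\sum_{j=0}^m f_{i_j}a_m^j=(\mathbf f,q_m)$ and $(\Delta_L^m g)_{i_0\ldots i_m}^{k_0\ldots k_m}=\sum_{l=0}^m c_l^m g^{k_l}=(w^m,\mathbf g)$; these notations are used for any sequences of pairwise distinct indices. The expression $\Delta_R^m y^{k}$ means $\Delta_R^m f$ with $f$ replaced by the row $y^k$ (i.e. $\mathbf f$ replaced by $v^k$), and $\Delta_L^m y_i$ means $\Delta_L^m g$ with $g$ replaced by the column $y_i$ (i.e. $\mathbf g$ replaced by $p_i$). Genericity means all finite square submatrices of $D$ and all elements of $K$ that need to be inverted are invertible. *)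

From Stdlib Require Import ClassicalEpsilon.
From HB Require Import structures.
From mathcomp Require Import all_boot all_order all_algebra.
Set Implicit Arguments. Unset Strict Implicit. Unset Printing Implicit Defensive.
Import Order.TTheory GRing.Theory.
Local Open Scope ring_scope.

Definition skew_field (K : unitRingType) : Prop :=
  forall x : K, x != 0 -> x \is a GRing.unit.

(* The matrix D is given as a function D k i = y_i^k = (v^k, p_i)
   (row k, column i).  Rows: y^k = fun i => D k i; columns: y_i = fun k => D k i. *)
Definition row_of (K : Type) (D : nat -> nat -> K) (k : nat) : nat -> K :=
  fun i => D k i.
Definition col_of (K : Type) (D : nat -> nat -> K) (i : nat) : nat -> K :=
  fun k => D k i.

Definition subD (K : Type) (D : nat -> nat -> K) (n : nat) (rs cs : seq nat)
  : 'M[K]_n := \matrix_(l < n, j < n) D (nth 0%N rs l) (nth 0%N cs j).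

Definition generic_mx (K : unitRingType) (D : nat -> nat -> K) : Prop :=
  forall (n : nat) (rs cs : seq nat), uniq rs -> uniq cs ->
    size rs = n -> size cs = n ->
    exists B : 'M[K]_n, subD D n rs cs *m B = 1%:M /\ B *m subD D n rs cs = 1%:M.

(* Coefficients a_m^j (j = 0..m) of q_m = sum_j p_{i_j} a_m^j, with
   ix = [i_0..i_m], kx = [k_0..k_m]:  (v^{k_l}, q_m) = sum_j y_{i_j}^{k_l} a^j
   = delta_{l m} for l = 0..m. *)
Definition qcoef_spec (K : unitRingType) (D : nat -> nat -> K)
  (ix kx : seq nat) (a : nat -> K) : Prop :=
  forall l : nat, (l < size kx)%N ->
    \sum_(j < size ix) D (nth 0%N kx l) (nth 0%N ix j) * a j
      = ((l == (size kx).-1)%N)%:R.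

(* Coefficients c_l^m (l = 0..m) of w^m = sum_l c_l^m v^{k_l}:
   (w^m, p_{i_j}) = sum_l c_l y_{i_j}^{k_l} = delta_{j m} for j = 0..m. *)
Definition wcoef_spec (K : unitRingType) (D : nat -> nat -> K)
  (ix kx : seq nat) (c : nat -> K) : Prop :=
  forall j : nat, (j < size ix)%N ->
    \sum_(l < size kx) c l * D (nth 0%N kx l) (nth 0%N ix j)
      = ((j == (size ix).-1)%N)%:R.

Definition qcoef (K : unitRingType) (D : nat -> nat -> K) (ix kx : seq nat)
  : nat -> K := epsilon (inhabits (fun _ => 0)) (qcoef_spec D ix kx).
Definition wcoef (K : unitRingType) (D : nat -> nat -> K) (ix kx : seq nat)
  : nat -> K := epsilon (inhabits (fun _ => 0)) (wcoef_spec D ix kx).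

Definition DeltaR (K : unitRingType) (D : nat -> nat -> K) (f : nat -> K)
  (ix kx : seq nat) : K :=
  \sum_(j < size ix) f (nth 0%N ix j) * qcoef D ix kx j.

Definition DeltaL (K : unitRingType) (D : nat -> nat -> K) (g : nat -> K)
  (ix kx : seq nat) : K :=
  \sum_(l < size kx) wcoef D ix kx l * g (nth 0%N kx l).

(* Write q(i_0..i_m; k_0..k_m) for the combination of the p_i dual to the
   v^k.  The two vectors q(i_0..i_{m-2} i_{m-1}; k_0..k_{m-1}) and
   q(i_0..i_{m-2} i_m; k_0..k_{m-1}) both pair to 1 with v^{k_{m-1}} and to 0
   with the earlier v^k, so their difference is orthogonal to v^{k_0..k_{m-1}}
   and, by uniqueness of the generic system, is q(i_0..i_m; k_0..k_m) times its
   pairing with v^{k_m}.  That pairing is nonzero: otherwise the difference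
   would vanish, and with it the last coefficient of the first q, which
   genericity forbids.  Pairing with f gives (a).  Left derivatives over K are
   right derivatives over the opposite ring K^c for the transposed matrix,
   which is again generic, so (b) is (a) there. *)

From Stdlib Require Import ClassicalEpsilon.
From HB Require Import structures.
From mathcomp Require Import all_boot all_order all_algebra.
Import GRing.Theory.
Set Implicit Arguments. Unset Strict Implicit. Unset Printing Implicit Defensive.
Local Open Scope ring_scope.

Section LinearCombinations.
Variable R : pzRingType.
Implicit Types (h a b : nat -> R) (ix : seq nat).

Definition lincomb h ix a : R := \sum_(j < size ix) h (nth 0%N ix j) * a j.

Lemma eq_lincomb h ix a b :
  (forall j, (j < size ix)%N -> a j = b j) -> lincomb h ix a = lincomb h ix b.
Proof. by move=> eq_ab; apply: eq_bigr => j _; rewrite eq_ab. Qed.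

Lemma lincomb_rcons h ix i a :
  lincomb h (rcons ix i) a = lincomb h ix a + h i * a (size ix).
Proof.
rewrite /lincomb size_rcons big_ord_recr /= nth_rcons ltnn eqxx; congr (_ + _).
by apply: eq_bigr => j _; rewrite nth_rcons ltn_ord.
Qed.

Lemma lincombBr h ix a b :
  lincomb h ix (fun j => a j - b j) = lincomb h ix a - lincomb h ix b.
Proof. by rewrite /lincomb -sumrB; apply: eq_bigr => j _; rewrite mulrBr. Qed.

Lemma lincombZr h ix a c : lincomb h ix (fun j => a j * c) = lincomb h ix a * c.
Proof. by rewrite /lincomb mulr_suml; apply: eq_bigr => j _; rewrite mulrA. Qed.

Definition coefB_rcons2 (p : nat) a1 a2 (j : nat) : R :=
  if (j < p)%N then a1 j - a2 j else if j == p then a1 p else - a2 p.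

Lemma lincomb_coefB_rcons2 h I i i' a1 a2 :
  lincomb h (rcons (rcons I i) i') (coefB_rcons2 (size I) a1 a2) =
  lincomb h (rcons I i) a1 - lincomb h (rcons I i') a2.
Proof.
rewrite !lincomb_rcons size_rcons /coefB_rcons2 ltnn eqxx ltnNge leqnSn.
rewrite (gtn_eqF (ltnSn _)) /= (@eq_lincomb _ _ _ (fun j => a1 j - a2 j)).
  by rewrite lincombBr mulrN opprD !addrA (addrAC _ (- _)).
by move=> j /= ->.
Qed.

End LinearCombinations.

Section GenericMatrix.
Variables (R : unitRingType) (E : nat -> nat -> R).
Hypothesis genE : generic_mx E.

Lemma generic_lincomb_eq0 rs cs c :
  uniq rs -> uniq cs -> size rs = size cs ->
  (forall l, (l < size rs)%N -> lincomb (row_of E (nth 0%N rs l)) cs c = 0) ->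
  forall j, (j < size cs)%N -> c j = 0.
Proof.
move=> urs ucs srs c0 j lt_j.
have [B [_ BM]] := genE urs ucs srs (erefl (size cs)).
pose v : 'cV[R]_(size cs) := \col_(j < size cs) c j.
have Mv : subD E (size cs) rs cs *m v = 0.
  apply/matrixP => l z; rewrite !mxE -[RHS](c0 l); last by rewrite srs.
  by apply: eq_bigr => j' _; rewrite !mxE.
have : v = 0 by rewrite -[v]mul1mx -BM -mulmxA Mv mulmx0.
by move/matrixP => /(_ (Ordinal lt_j) 0); rewrite !mxE.
Qed.

Lemma qcoef_spec_row ix kx a l :
  qcoef_spec E ix kx a -> (l < size kx)%N ->
  lincomb (row_of E (nth 0%N kx l)) ix a = (l == (size kx).-1)%:R.
Proof. by move=> aP; apply: aP. Qed.

Lemma qcoef_spec_uniq ix kx a b :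
  uniq ix -> uniq kx -> size ix = size kx ->
  qcoef_spec E ix kx a -> qcoef_spec E ix kx b ->
  forall j, (j < size ix)%N -> a j = b j.
Proof.
move=> uix ukx sz aP bP j lt_j; apply/eqP; rewrite -subr_eq0; apply/eqP.
apply: (generic_lincomb_eq0 (c := fun j => a j - b j) ukx uix (esym sz) _ lt_j).
by move=> l lt_l; rewrite lincombBr !qcoef_spec_row // subrr.
Qed.

Lemma qcoefP ix kx : uniq ix -> uniq kx -> size ix = size kx ->
  qcoef_spec E ix kx (qcoef E ix kx).
Proof.
move=> uix ukx sz; apply: epsilon_spec.
case sk: (size kx) sz => [|n] sz; first by exists (fun=> 0) => l; rewrite sk.
have [B [MB _]] := genE ukx uix sk sz.
exists (fun j => B (inord j) ord_max) => l; rewrite sz sk => lt_l.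
have := congr1 (fun M : 'M_n.+1 => M (inord l) ord_max) MB; rewrite !mxE.
rewrite -(inj_eq val_inj) /= inordK // => <-.
by apply: eq_bigr => j _; rewrite !mxE inord_val inordK.
Qed.

Lemma qcoef_spec_last_neq0 I i kx a :
  uniq (rcons I i) -> uniq kx -> size kx = (size I).+1 ->
  qcoef_spec E (rcons I i) kx a -> a (size I) != 0.
Proof.
move=> uIi ukx sk aP; apply/eqP => a_last0.
have uI : uniq I by move: uIi; rewrite rcons_uniq => /andP[].
have rowI l : (l < size kx)%N ->
    lincomb (row_of E (nth 0%N kx l)) I a = (l == size I)%:R.
  by move=> lt_l; rewrite -[LHS]addr0 -(mulr0 (E (nth 0%N kx l) i)) -a_last0
    -lincomb_rcons qcoef_spec_row // sk.
have a_I0 : forall j, (j < size I)%N -> a j = 0.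
  apply: (generic_lincomb_eq0 (take_uniq (size I) ukx) uI).
    by rewrite size_takel // sk.
  move=> l; rewrite size_takel ?sk // => lt_l.
  by rewrite nth_take // rowI ?(ltn_eqF lt_l) // sk ltnS ltnW.
move: (rowI (size I)); rewrite sk ltnSn eqxx => /(_ isT) /eqP.
rewrite (eq_lincomb (b := fun=> 0) _ a_I0) /lincomb big1 => [|j _]; last exact: mulr0.
by rewrite eq_sym oner_eq0.
Qed.

End GenericMatrix.

Section Recursion.
Variables (R : unitRingType) (E : nat -> nat -> R).
Hypothesis genE : generic_mx E.
Variables (I ks : seq nat) (i i' km : nat) (a1 a2 : nat -> R).
Hypotheses (uIii : uniq (rcons (rcons I i) i')) (uks : uniq (rcons ks km)).
Hypothesis sks : size ks = (size I).+1.
Hypotheses (a1P : qcoef_spec E (rcons I i) ks a1)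
           (a2P : qcoef_spec E (rcons I i') ks a2).

Let b := coefB_rcons2 (size I) a1 a2.
Let d := lincomb (row_of E km) (rcons I i) a1 - lincomb (row_of E km) (rcons I i') a2.

Lemma lincomb_coefB_row l : (l < (size I).+2)%N ->
  lincomb (row_of E (nth 0%N (rcons ks km) l)) (rcons (rcons I i) i') b =
  (l == (size I).+1)%:R * d.
Proof.
move=> lt_l; rewrite lincomb_coefB_rcons2 nth_rcons sks.
case: (ltngtP l (size I).+1) lt_l => [lt_lI1 _ | lt_I1l | -> _].
- by rewrite !qcoef_spec_row ?sks // subrr mul0r.
- by rewrite ltnS leqNgt lt_I1l.
- by rewrite mul1r.
Qed.

Lemma pivot_neq0 : d != 0.
Proof.
apply/eqP => d0.
have uIi : uniq (rcons I i) by move: uIii; rewrite rcons_uniq => /andP[].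
have uks' := subseq_uniq (subseq_rcons ks km) uks.
have b_I0 : b (size I) = 0.
  apply: (generic_lincomb_eq0 genE uks uIii); rewrite ?size_rcons ?sks //.
  by move=> l lt_l; rewrite lincomb_coefB_row // d0 mulr0.
have := qcoef_spec_last_neq0 genE uIi uks' sks a1P.
by move: b_I0; rewrite /b /coefB_rcons2 ltnn eqxx => ->; rewrite eqxx.
Qed.

Lemma qcoef_spec_rcons2 : skew_field R ->
  qcoef_spec E (rcons (rcons I i) i') (rcons ks km) (fun j => b j * d^-1).
Proof.
move=> skewR l; rewrite size_rcons sks => lt_l.
rewrite -[LHS]/(lincomb (row_of E _) _ (fun j => b j * d^-1)).
rewrite lincombZr lincomb_coefB_row //.
by rewrite -mulrA divrr ?mulr1 //; apply/skewR/pivot_neq0.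
Qed.

End Recursion.

Section RightDifferenceDerivatives.
Variables (R : unitRingType) (E : nat -> nat -> R).
Hypotheses (skewR : skew_field R) (genE : generic_mx E).

Lemma DeltaR1 f i k : DeltaR E f [:: i] [:: k] = f i * (E k i)^-1.
Proof.
have /(_ 0%N isT) := qcoefP genE (ix := [:: i]) (kx := [:: k]) isT isT erefl.
rewrite big_ord1 /= => Eki_q.
have Eki_unit : E k i \is a GRing.unit.
  apply/skewR/eqP => Eki0; move/eqP: Eki_q.
  by rewrite Eki0 mul0r eq_sym oner_eq0.
by rewrite /DeltaR big_ord1 /= -[qcoef _ _ _ _](mulKr Eki_unit) Eki_q mulr1.
Qed.

Lemma DeltaR_rcons2 f I ks i i' km :
  uniq (rcons (rcons I i) i') -> uniq (rcons ks km) -> size ks = (size I).+1 ->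
  DeltaR E f (rcons (rcons I i) i') (rcons ks km) =
    (DeltaR E f (rcons I i) ks - DeltaR E f (rcons I i') ks)
    * (DeltaR E (row_of E km) (rcons I i) ks
       - DeltaR E (row_of E km) (rcons I i') ks)^-1.
Proof.
move=> uIii uks sks.
have uIi : uniq (rcons I i) by move: uIii; rewrite rcons_uniq => /andP[].
have uIi' : uniq (rcons I i').
  move: uIii; rewrite !rcons_uniq mem_rcons inE negb_or.
  by case/andP=> /andP[_ ->] /andP[_ ->].
have uks' := subseq_uniq (subseq_rcons ks km) uks.
have size_rcons_I j : size (rcons I j) = size ks by rewrite size_rcons sks.
have size_rcons2 : size (rcons (rcons I i) i') = size (rcons ks km).
  by rewrite !size_rcons sks.
have a1P := qcoefP genE uIi uks' (size_rcons_I i).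
have a2P := qcoefP genE uIi' uks' (size_rcons_I i').
have qcoefE := qcoef_spec_uniq genE uIii uks size_rcons2
  (qcoefP genE uIii uks size_rcons2) (qcoef_spec_rcons2 genE uIii uks sks a1P a2P skewR).
rewrite {1}/DeltaR -[LHS]/(lincomb f _ _) (eq_lincomb _ qcoefE).
by rewrite lincombZr lincomb_coefB_rcons2.
Qed.

Lemma DeltaR2 f i i' k k' : i != i' -> k != k' ->
  DeltaR E f [:: i; i'] [:: k; k'] =
    (DeltaR E f [:: i] [:: k] - DeltaR E f [:: i'] [:: k])
    * (DeltaR E (row_of E k') [:: i] [:: k]
       - DeltaR E (row_of E k') [:: i'] [:: k])^-1.
Proof.
by move=> ii' kk'; apply: (DeltaR_rcons2 f (I := [::]) (ks := [:: k])) => /=;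
  rewrite ?inE ?andbT.
Qed.

End RightDifferenceDerivatives.

Lemma generic_mx_tr (R : unitRingType) (E : nat -> nat -> R) :
  generic_mx E -> generic_mx (K := R^c) (fun i k => E k i).
Proof.
move=> genE n rs cs urs ucs srs scs.
have [B [EB BE]] := genE n cs rs ucs urs scs srs.
exists (B^T : 'M[R^c]_n); split; apply/matrixP => l j.
- move/matrixP/(_ j l): BE; rewrite !mxE eq_sym => <-.
  by apply: eq_bigr => z _; rewrite !mxE.
- move/matrixP/(_ j l): EB; rewrite !mxE eq_sym => <-.
  by apply: eq_bigr => z _; rewrite !mxE.
Qed.

Theorem theorem2 (K : unitRingType) (hK : skew_field K)
  (D : nat -> nat -> K) (f g : nat -> K) (hD : generic_mx D) :
  (* (a) right difference derivatives *)
  ((forall i k : nat,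
      DeltaR D f [:: i] [:: k] = f i * (D k i)^-1)
   /\ (forall i i' k k' : nat, i != i' -> k != k' ->
      DeltaR D f [:: i; i'] [:: k; k'] =
        (DeltaR D f [:: i] [:: k] - DeltaR D f [:: i'] [:: k])
        * (DeltaR D (row_of D k') [:: i] [:: k]
           - DeltaR D (row_of D k') [:: i'] [:: k])^-1)
   /\ (forall (m : nat) (isP ksP : seq nat) (i i' km : nat),
      (1 <= m)%N -> size isP = m.-1 -> size ksP = m ->
      uniq (rcons (rcons isP i) i') -> uniq (rcons ksP km) ->
      DeltaR D f (rcons (rcons isP i) i') (rcons ksP km) =
        (DeltaR D f (rcons isP i) ksP - DeltaR D f (rcons isP i') ksP)
        * (DeltaR D (row_of D km) (rcons isP i) ksP
           - DeltaR D (row_of D km) (rcons isP i') ksP)^-1))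
  /\
  (* (b) left difference derivatives *)
  ((forall i k : nat,
      DeltaL D g [:: i] [:: k] = (D k i)^-1 * g k)
   /\ (forall i i' k k' : nat, i != i' -> k != k' ->
      DeltaL D g [:: i; i'] [:: k; k'] =
        (DeltaL D (col_of D i') [:: i] [:: k]
           - DeltaL D (col_of D i') [:: i] [:: k'])^-1
        * (DeltaL D g [:: i] [:: k] - DeltaL D g [:: i] [:: k']))
   /\ (forall (m : nat) (isP ksP : seq nat) (im k k' : nat),
      (1 <= m)%N -> size isP = m -> size ksP = m.-1 ->
      uniq (rcons isP im) -> uniq (rcons (rcons ksP k) k') ->
      DeltaL D g (rcons isP im) (rcons (rcons ksP k) k') =
        (DeltaL D (col_of D im) isP (rcons ksP k)
           - DeltaL D (col_of D im) isP (rcons ksP k'))^-1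
        * (DeltaL D g isP (rcons ksP k) - DeltaL D g isP (rcons ksP k')))).
Proof.
have skewKc : skew_field K^c by move=> x /hK.
have genDc := generic_mx_tr hD.
split; split; [exact: (DeltaR1 hK hD) | split | move=> i k | split].
- exact: (DeltaR2 hK hD).
- move=> m I ks i i' km m_ge1 sI sks uIii uks.
  by apply: (DeltaR_rcons2 hK hD f uIii uks); rewrite sI sks prednK.
- exact: (DeltaR1 skewKc genDc g k i).
- move=> i i' k k' ii' kk'; exact: (DeltaR2 skewKc genDc g kk' ii').
- move=> m I ks im k k' m_ge1 sI sks uIim ukk.
  by apply: (DeltaR_rcons2 skewKc genDc g ukk uIim); rewrite sI sks prednK.
Qed.
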